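(* Let $\Lambda$ be diagonal with entries in $[0,1]$, $W$ row-stochastic, $\beta\in[0,1]^n$, and set $W^{(1)}=[\mathbf 1-\beta]W$, $W^{(2)}=[\beta]W$. Then, with $\bar A_d:=\begin{pmatrix}0 & I\\ \Lambda W^{(2)} & \Lambda W^{(1)}\end{pmatrix}$, one has $\rho(\bar A_d)\ge\rho(\Lambda W)$.
   Context: $[v]$ denotes the diagonal matrix with diagonal $v$; $\mathbf 1$ is the all-ones vector; $\rho$ is spectral radius. *)

From HB Require Import structures.
From mathcomp Require Import all_boot all_order all_algebra.
From mathcomp Require Import complex.
Set Implicit Arguments. Unset Strict Implicit. Unset Printing Implicit Defensive.
Import Order.TTheory GRing.Theory Num.Theory.
Local Open Scope ring_scope.

(* Real matrices over an arbitrary real closed field R (e.g. the reals);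
   eigenvalues are taken in the algebraic closure R[i] = complex R. *)

Definition complexify (R : rcfType) m n (A : 'M[R]_(m, n)) : 'M[R[i]]_(m, n) :=
  map_mx (fun x : R => (x%:C)%C) A.

Definition eigenvalues (R : rcfType) n (A : 'M[R]_n) : seq R[i] :=
  sval (closed_field_poly_normal (char_poly (complexify A))).

(* spectral radius: max modulus of the (complex) eigenvalues, 0 if n = 0.
   The value is a nonnegative real, stored in R[i]. *)
Definition spectral_radius (R : rcfType) n (A : 'M[R]_n) : R[i] :=
  \big[Num.max/0]_(z <- eigenvalues A) `|z|.

Definition diagv (R : rcfType) n (v : 'I_n -> R) : 'M[R]_n :=
  diag_mx (\row_i v i).

Definition row_stochastic (R : rcfType) n (W : 'M[R]_n) : Prop :=
  (forall i j, 0 <= W i j) /\ (forall i, \sum_j W i j = 1).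

From HB Require Import structures.
From mathcomp Require Import all_boot all_order all_algebra.
From mathcomp Require Import complex polyrcf.
From mathcomp Require Import ring lra.
Import Order.TTheory GRing.Theory Num.Theory.
Set Implicit Arguments. Unset Strict Implicit. Unset Printing Implicit Defensive.
Local Open Scope ring_scope.

(* Let z be an eigenvalue of B := Lam W >= 0 with eigenvector v and put
   u := |v|, r := |z|.  Then r u <= B u, and since the rows of B sum to at
   most 1, r <= 1.  The vector x := (u, r u) then satisfies Abar x >= r x.
   For a nonnegative matrix A, a nonzero x >= 0 with A x >= r x forces a real
   eigenvalue s >= r: otherwise det (s I - A) > 0 for all s >= r, and an
   induction on the dimension through the Schur complement shows that
   r I - A is then monotone ((r I - A) y >= 0 implies y >= 0); applied to
   y = -x this gives x = 0. *)

Section BigmaxNorm.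
Variable C : numDomainType.
Implicit Types l : seq C.

Lemma bigmax_norm_real l : \big[Num.max/0]_(z <- l) `|z| \is Num.real.
Proof. by apply: bigmax_real => //; rewrite ?real0 // => i _; apply: normr_real. Qed.

Lemma bigmax_norm_le l c : 0 <= c -> (forall z, z \in l -> `|z| <= c) ->
  \big[Num.max/0]_(z <- l) `|z| <= c.
Proof.
elim: l => [|a l IH] c0 h; first by rewrite big_nil.
rewrite big_cons comparable_ge_max ?h ?mem_head ?IH // => [z zl|].
  by apply: h; rewrite in_cons zl orbT.
by apply: real_comparable; [apply: normr_real | apply: bigmax_norm_real].
Qed.

Lemma norm_le_bigmax_norm l z : z \in l -> `|z| <= \big[Num.max/0]_(w <- l) `|w|.
Proof.
have cmp w l' : `|w| >=< \big[Num.max/0]_(v <- l') `|v|.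
  by rewrite real_comparable ?normr_real ?bigmax_norm_real.
elim: l => [|a l IH] //; rewrite in_cons big_cons => /orP[/eqP ->|zl].
  by rewrite comparable_le_max ?lexx.
by rewrite comparable_le_max ?IH ?orbT.
Qed.

Lemma bigmax_norm_ge0 l : 0 <= \big[Num.max/0]_(z <- l) `|z|.
Proof.
elim: l => [|a l IH]; first by rewrite big_nil.
rewrite big_cons comparable_le_max ?IH ?orbT //.
by rewrite real_comparable ?normr_real ?bigmax_norm_real.
Qed.

End BigmaxNorm.

Lemma horner_char_poly (R : comNzRingType) n (A : 'M[R]_n) s :
  (char_poly A).[s] = \det (s%:M - A).
Proof.
symmetry; rewrite horner_sum; apply: eq_bigr => σ _.
rewrite hornerM horner_exp !hornerE; congr (_ * _).
rewrite (big_morph _ (fun p q => hornerM p q s) (hornerC 1 s)).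
by apply: eq_bigr => i _; rewrite !mxE !(hornerE, hornerMn).
Qed.

Lemma det_block_schur (F : fieldType) n (a : 'M[F]_1) (b : 'M[F]_(1, n))
    (c : 'M[F]_(n, 1)) (D : 'M[F]_n) :
  D \in unitmx -> \det (block_mx a b c D) = \det D * (a - b *m invmx D *m c) 0 0.
Proof.
move=> Du.
have -> : block_mx a b c D = block_mx 1%:M (b *m invmx D) 0 1%:M *m
    block_mx (a - b *m invmx D *m c) 0 c D.
  by rewrite mulmx_block !(mul1mx, mul0mx, mulmx0, addr0, add0r) mulmxKV // subrK.
by rewrite det_mulmx det_ublock det_lblock !det1 det_mx11 !mul1r mulrC.
Qed.

Section RealPoly.
Variable R : rcfType.
Implicit Types p : {poly R}.

Lemma monic_root_ge p s : p \is monic -> p.[s] <= 0 -> exists2 x, s <= x & root p x.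
Proof.
move=> pm ps.
have lc : 0 < lead_coef p by rewrite (monicP pm) ltr01.
have [N hN] := poly_pinfty_gt_lc lc.
have sN : s <= Num.max s N by rewrite le_max lexx.
have pN : 0 < p.[Num.max s N].
  by apply: lt_le_trans lc (hN _ _); rewrite le_max lexx orbT.
have [x /andP[sx _] rx] := poly_ivt sN (introT andP (conj ps (ltW pN))).
by exists x.
Qed.

Lemma horner_le0_right p x : (forall y, x < y -> p.[y] <= 0) -> p.[x] <= 0.
Proof.
move=> hp; rewrite leNgt; apply/negP => px.
have [d d0 hd] := poly_cont x p px.
have xd : x < x + d / 2 by rewrite ltrDl divr_gt0.
have := hd (x + d / 2); rewrite addrC addKr ger0_norm ?divr_ge0 ?ltW //.
rewrite ltr_pdivrMr ?ltr0n // ltr_pMr ?ltr1n // => /(_ isT).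
rewrite ltr_norml => /andP[+ _]; have := hp _ xd; lra.
Qed.

Lemma max_root p x0 : p != 0 -> root p x0 ->
  exists s1, [/\ x0 <= s1, root p s1 & forall x, root p x -> x <= s1].
Proof.
move=> p0 rx0; exists (\big[Num.max/x0]_(x <- rootsR p) x); split.
- exact: bigmax_ge_id.
- rewrite big_seq; apply: (big_ind (root p)) => // [x y rx ry|x].
    by rewrite /Num.max; case: ifP.
  by move=> xr; move: (roots_on_rootsR p0 x); rewrite xr => /andP[].
- move=> x rx; apply: (@le_bigmax_seq _ _ _ _ _ x xpredT) => //.
  by rewrite -(roots_on_rootsR p0 x) rx in_itv.
Qed.

End RealPoly.

Section NonnegMatrices.
Variable R : rcfType.

Definition nonneg_mx m n (M : 'M[R]_(m, n)) := forall i j, 0 <= M i j.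

(* [M] is monotone in Collatz's sense: [M y >= 0] forces [y >= 0]. *)
Definition monotone_mx n (M : 'M[R]_n) :=
  forall y : 'cV[R]_n, nonneg_mx (M *m y) -> nonneg_mx y.

Definition char_poly_pos_from n (A : 'M[R]_n) t :=
  forall s, t <= s -> 0 < (char_poly A).[s].

Lemma nonneg_mx_add m n (A B : 'M[R]_(m, n)) :
  nonneg_mx A -> nonneg_mx B -> nonneg_mx (A + B).
Proof. by move=> hA hB i j; rewrite mxE addr_ge0. Qed.

Lemma nonneg_mx_mul m n p (A : 'M[R]_(m, n)) (B : 'M[R]_(n, p)) :
  nonneg_mx A -> nonneg_mx B -> nonneg_mx (A *m B).
Proof. by move=> hA hB i j; rewrite mxE sumr_ge0 // => k _; apply: mulr_ge0. Qed.

Lemma nonneg_diagv n (d : 'I_n -> R) :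
  (forall i, 0 <= d i) -> nonneg_mx (diagv d).
Proof. by move=> hd i j; rewrite !mxE mulrn_wge0. Qed.

Lemma nonneg_col_mxP m1 m2 n {A : 'M[R]_(m1, n)} {B : 'M[R]_(m2, n)} :
  nonneg_mx (col_mx A B) <-> nonneg_mx A /\ nonneg_mx B.
Proof.
split=> [h|[hA hB] i j].
  by split=> i j; [have := h (lshift m2 i) j; rewrite col_mxEu
                  | have := h (rshift m1 i) j; rewrite col_mxEd].
by rewrite -(splitK i); case: (split i) => k /=; rewrite ?col_mxEu ?col_mxEd.
Qed.

Lemma nonneg_block_mxP m1 m2 n1 n2 {a : 'M[R]_(m1, n1)} {b : 'M[R]_(m1, n2)}
    {c : 'M[R]_(m2, n1)} {d : 'M[R]_(m2, n2)} :
  nonneg_mx (block_mx a b c d) <->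
  [/\ nonneg_mx a, nonneg_mx b, nonneg_mx c & nonneg_mx d].
Proof.
have row_mxP m (l : 'M[R]_(m, n1)) (r : 'M[R]_(m, n2)) :
    nonneg_mx (row_mx l r) <-> nonneg_mx l /\ nonneg_mx r.
  split=> [h|[hl hr] i j].
    by split=> i j; [have := h i (lshift n2 j); rewrite row_mxEl
                    | have := h i (rshift n1 j); rewrite row_mxEr].
  by rewrite -(splitK j); case: (split j) => k /=; rewrite ?row_mxEl ?row_mxEr.
split=> [/nonneg_col_mxP[/row_mxP[? ?] /row_mxP[? ?]] //|[? ? ? ?]].
by apply/nonneg_col_mxP; split; apply/row_mxP.
Qed.

Lemma monotone_invmx_nonneg n (M : 'M[R]_n) :
  monotone_mx M -> M \in unitmx -> nonneg_mx (invmx M).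
Proof.
move=> hM Mu i j.
have : nonneg_mx (M *m col j (invmx M)).
  by rewrite colE mulmxA mulmxV // mul1mx => k l; rewrite !mxE ler0n.
by move/hM/(_ i 0); rewrite mxE.
Qed.

Lemma char_poly_block_horner n (a : 'M[R]_1) (b : 'M[R]_(1, n))
    (c : 'M[R]_(n, 1)) (D : 'M[R]_n) s :
  s%:M - D \in unitmx ->
  (char_poly (block_mx a b c D)).[s] =
  (char_poly D).[s] * (s - a 0 0 - (b *m invmx (s%:M - D) *m c) 0 0).
Proof.
move=> Du; rewrite !horner_char_poly (scalar_mx_block 1 n s) opp_block_mx.
rewrite add_block_mx !sub0r det_block_schur // !mulmxN !mulNmx !opprK.
by rewrite !mxE eqxx mulr1n.
Qed.

Section BlockStep.
Variables (n : nat) (a : 'M[R]_1) (b : 'M[R]_(1, n)) (c : 'M[R]_(n, 1)) (D : 'M[R]_n).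
Hypotheses (b_nn : nonneg_mx b) (c_nn : nonneg_mx c).
Hypothesis monotone_D :
  forall t, char_poly_pos_from D t -> monotone_mx (t%:M - D).

Let A := block_mx a b c D.

Lemma schur_complement_nonneg s :
  char_poly_pos_from D s -> 0 <= (b *m invmx (s%:M - D) *m c) 0 0.
Proof.
move=> Ds; have Du : s%:M - D \in unitmx.
  by rewrite unitmxE unitfE -horner_char_poly gt_eqF ?Ds.
have N_nn := monotone_invmx_nonneg (monotone_D Ds) Du.
exact: nonneg_mx_mul (nonneg_mx_mul b_nn N_nn) c_nn 0 0.
Qed.

(* Beyond the largest real root [s1] of [char_poly D], the Schur complement is
   nonnegative, so [char_poly A <= char_poly D * ('X - a)] there; at [s1] this
   would make [char_poly A] nonpositive. *)
Lemma char_poly_pos_from_drsubmx t :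
  char_poly_pos_from A t -> char_poly_pos_from D t.
Proof.
move=> At s0 ts0; rewrite ltNge; apply/negP => Ds0.
have Dm := char_poly_monic D.
have [x0 s0x0 rx0] := monic_root_ge Dm Ds0.
have [s1 [x0s1 rs1 s1max]] := max_root (monic_neq0 Dm) rx0.
have Dpos s : s1 < s -> 0 < (char_poly D).[s].
  move=> s1s; rewrite ltNge; apply/negP => /(monic_root_ge Dm) [x sx /s1max].
  by rewrite leNgt (lt_le_trans s1s sx).
pose f := char_poly A - char_poly D * ('X - (a 0 0)%:P).
have : f.[s1] <= 0.
  apply: horner_le0_right => s s1s.
  have Ds : char_poly_pos_from D s by move=> s' ss'; apply/Dpos/(lt_le_trans s1s).
  have Du : s%:M - D \in unitmx.
    by rewrite unitmxE unitfE -horner_char_poly gt_eqF ?Ds.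
  have := schur_complement_nonneg Ds; have := Dpos _ s1s.
  rewrite /f !hornerE char_poly_block_horner //; nra.
rewrite /f !hornerE (rootP rs1) mul0r subr0 leNgt At //.
by rewrite (le_trans ts0 (le_trans s0x0 x0s1)).
Qed.

Lemma monotone_block_mx t : char_poly_pos_from A t -> monotone_mx (t%:M - A).
Proof.
move=> At; have Dt := char_poly_pos_from_drsubmx At.
have Du : t%:M - D \in unitmx.
  by rewrite unitmxE unitfE -horner_char_poly gt_eqF ?Dt.
set N := invmx (t%:M - D).
have N_nn : nonneg_mx N by apply/monotone_invmx_nonneg/Du/monotone_D.
have sigma_pos : 0 < t - a 0 0 - (b *m N *m c) 0 0.
  by have := At t (lexx t); rewrite char_poly_block_horner // pmulr_rgt0 ?Dt.
move=> y; rewrite -[y]vsubmxK (scalar_mx_block 1 n t) opp_block_mx.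
rewrite add_block_mx !sub0r.
rewrite mul_block_col nonneg_col_mxP; set y0 := usubmx y; set y1 := dsubmx y.
move=> /nonneg_col_mxP[top]; set w := - c *m y0 + _ => w_nn.
have y1E : y1 = N *m w + N *m c *m y0.
  by rewrite -mulmxA -mulmxDr /w mulNmx addrAC addNr add0r mulKmx.
have topE : ((t%:M - a) *m y0 + - b *m y1) 0 0 =
    (t - a 0 0 - (b *m N *m c) 0 0) * y0 0 0 - (b *m N *m w) 0 0.
  rewrite y1E [y0]mx11_scalar mulmxDr !mulmxA !mul_mx_scalar !mulNmx.
  move: (b *m N *m w) (b *m N *m c) => p q.
  by rewrite !mxE eqxx /= !mulr1n; ring.
have y0_nn : nonneg_mx y0.
  move=> i j; rewrite !ord1; have := top 0 0; rewrite topE.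
  have := nonneg_mx_mul (nonneg_mx_mul b_nn N_nn) w_nn 0 0.
  move: sigma_pos; nra.
split=> //; rewrite y1E.
by apply: nonneg_mx_add; apply: nonneg_mx_mul => //; apply: nonneg_mx_mul.
Qed.

End BlockStep.

Lemma monotone_of_char_poly_pos n (A : 'M[R]_n) t :
  nonneg_mx A -> char_poly_pos_from A t -> monotone_mx (t%:M - A).
Proof.
elim: n A t => [|n IH] A t; first by move=> _ _ y _ [].
rewrite -[A](@submxK _ 1 n 1 n) => /(@nonneg_block_mxP 1 n 1 n)[_ b_nn c_nn D_nn].
by apply: monotone_block_mx => // t'; apply: IH.
Qed.

Lemma char_poly_root_ge n (A : 'M[R]_n) (x : 'cV[R]_n) r :
  nonneg_mx A -> nonneg_mx x -> x != 0 -> nonneg_mx (A *m x - r *: x) ->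
  exists2 s, r <= s & root (char_poly A) s.
Proof.
move=> A_nn x_nn x_neq0 Ax_nn; have Am := char_poly_monic A.
have rootsRP s : (s \in rootsR (char_poly A)) = root (char_poly A) s.
  by rewrite -(roots_on_rootsR (monic_neq0 Am) s) in_itv andbT.
have [/hasP[s] |noroot] := boolP (has (fun s => r <= s) (rootsR (char_poly A))).
  by rewrite rootsRP => rs rs'; exists s.
have Apos : char_poly_pos_from A r.
  move=> s rs; rewrite ltNge; apply/negP => /(monic_root_ge Am) [z sz rz].
  by case/hasP: noroot; exists z; rewrite ?rootsRP // (le_trans rs sz).
have := @monotone_of_char_poly_pos _ A r A_nn Apos (- x).
rewrite mulmxN mulmxBl mul_scalar_mx opprB => /(_ Ax_nn) Nx_nn.
case/eqP: x_neq0; apply/matrixP => i j; apply/eqP.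
by rewrite mxE eq_le x_nn andbT -oppr_ge0; move: (Nx_nn i j); rewrite mxE.
Qed.

End NonnegMatrices.

Lemma mem_eigenvalues (R : rcfType) n (A : 'M[R]_n) z :
  (z \in eigenvalues A) = root (char_poly (complexify A)) z.
Proof.
rewrite /eigenvalues; case: closed_field_poly_normal => r /= ->.
by rewrite rootZ ?root_prod_XsubC // (monicP (char_poly_monic _)) oner_neq0.
Qed.

Section SpectralRadius.
Variable R : rcfType.

Definition modulus (z : R[i]) : R := complex.Re `|z|.

Lemma modulusE z : (modulus z)%:C%C = `|z|.
Proof. by rewrite /modulus RRe_real // normr_real. Qed.

Lemma modulus_ge0 z : 0 <= modulus z.
Proof. by rewrite -ler0c modulusE. Qed.

Lemma real_root_le_spectral_radius n (A : 'M[R]_n) s :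
  0 <= s -> root (char_poly A) s -> s%:C%C <= spectral_radius A.
Proof.
move=> s_ge0 rs; have : s%:C%C \in eigenvalues A.
  by rewrite mem_eigenvalues -(map_char_poly (real_complex R)) fmorph_root.
by move/norm_le_bigmax_norm; rewrite ger0_norm // ler0c.
Qed.

Lemma spectral_radius_ge n (A : 'M[R]_n) (x : 'cV[R]_n) r :
  nonneg_mx A -> 0 <= r -> nonneg_mx x -> x != 0 -> nonneg_mx (A *m x - r *: x) ->
  r%:C%C <= spectral_radius A.
Proof.
move=> A_nn r_ge0 x_nn x_neq0 /(char_poly_root_ge A_nn x_nn x_neq0) [s rs root_s].
apply: le_trans (real_root_le_spectral_radius (le_trans r_ge0 rs) root_s).
by rewrite lecR.
Qed.

(* The entrywise modulus of an eigenvector: [|B v| <= B |v|] for [B >= 0]. *)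
Lemma nonneg_subeigenvector n (B : 'M[R]_n) z : nonneg_mx B -> z \in eigenvalues B ->
  exists u : 'cV[R]_n, [/\ nonneg_mx u, exists i, 0 < u i 0 &
    forall i, modulus z * u i 0 <= (B *m u) i 0].
Proof.
move=> B_nn; rewrite mem_eigenvalues => /rootP; rewrite horner_char_poly.
rewrite -det_tr => /eqP /det0P [v v_neq0].
rewrite linearB /= tr_scalar_mx mulmxBr mul_mx_scalar => /eqP.
rewrite subr_eq0 => /eqP vB.
exists (\col_i modulus (v 0 i)); split.
- by move=> i j; rewrite mxE modulus_ge0.
- have [i vi] : exists i, v 0 i != 0.
    apply/existsP; apply: contraR v_neq0; rewrite negb_exists => /forallP v0.
    by apply/eqP/matrixP => i j; rewrite (ord1 i) mxE; apply/eqP/negPn/v0.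
  exists i; rewrite mxE lt_def modulus_ge0 andbT.
  by rewrite -(inj_eq (@complexI _)) modulusE normr_eq0.
- move=> i; rewrite -lecR rmorphM /= modulusE mxE modulusE -normrM.
  move/matrixP: vB => /(_ 0 i); rewrite !mxE => ->.
  rewrite rmorph_sum /=; apply: le_trans (ler_norm_sum _ _ _) _.
  apply: ler_sum => j _; rewrite !mxE rmorphM /= modulusE normrM mulrC.
  by rewrite ger0_norm // ler0c.
Qed.

End SpectralRadius.

Lemma diagv_mulmxE (R : rcfType) m n (d : 'I_m -> R) (M : 'M[R]_(m, n)) i j :
  (diagv d *m M) i j = d i * M i j.
Proof. by rewrite /diagv mul_diag_mx !mxE. Qed.

(* Look at a largest entry of [u]. *)
Lemma subeigenvalue_le1 (R : rcfType) n (B : 'M[R]_n) (u : 'cV[R]_n) r i1 :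
  nonneg_mx B -> (forall i, \sum_j B i j <= 1) -> nonneg_mx u -> 0 < u i1 0 ->
  (forall i, r * u i 0 <= (B *m u) i 0) -> r <= 1.
Proof.
move=> B_nn Bsum u_nn ui1 hu.
have [im _ umax] := @arg_maxP _ _ _ i1 xpredT (fun i => u i 0) isT.
have uim : 0 < u im 0 by apply: lt_le_trans ui1 (umax _ isT).
rewrite -(ler_pM2r uim) mul1r (le_trans (hu im)) // mxE.
apply: le_trans (_ : \sum_j B im j * u im 0 <= _).
  by apply: ler_sum => j _; apply: ler_wpM2l => //; apply: umax.
by rewrite -mulr_suml ler_piMl ?Bsum // ltW.
Qed.

(* The bottom entries read [lam (beta + r (1 - beta)) (W u) - r^2 u], which is
   at least [r u beta (1 - r)] once [r u <= lam (W u)] is used. *)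
Lemma companion_lift_subeigenvector (R : rcfType) n (lam beta : 'I_n -> R)
    (W : 'M[R]_n) (u : 'cV[R]_n) r :
  (forall i, 0 <= beta i <= 1) -> 0 <= r <= 1 -> nonneg_mx u ->
  (forall i, r * u i 0 <= (diagv lam *m W *m u) i 0) ->
  let x := col_mx u (r *: u) in
  nonneg_mx (block_mx 0 1%:M (diagv lam *m (diagv beta *m W))
               (diagv lam *m (diagv (fun i => 1 - beta i) *m W)) *m x - r *: x).
Proof.
move=> hbeta /andP[r_ge0 r_le1] u_nn hu /=.
rewrite mul_block_col scale_col_mx opp_col_mx add_col_mx mul0mx mul1mx add0r subrr.
apply/nonneg_col_mxP; split=> i j; first by rewrite mxE.
have := hu i; rewrite (ord1 j) -!mulmxA -scalemxAr /diagv !mul_diag_mx.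
move: (W *m u) => Wu; rewrite !mxE.
have := hbeta i; have := u_nn i 0.
move: (u i 0) (beta i) (lam i) (Wu i 0) => a b l d a_ge0 /andP[b_ge0 b_le1] lift.
have k1 : 0 <= (l * d - r * a) * (b + r * (1 - b)).
  by apply: mulr_ge0; rewrite ?subr_ge0 // addr_ge0 // mulr_ge0 // subr_ge0.
have k2 : 0 <= r * a * b * (1 - r) by rewrite !mulr_ge0 // subr_ge0.
nra.
Qed.

Theorem corollary2 (R : rcfType) (n : nat) (lam beta : 'I_n -> R) (W : 'M[R]_n) :
  (forall i, 0 <= lam i <= 1) ->
  row_stochastic W ->
  (forall i, 0 <= beta i <= 1) ->
  let Lam := diagv lam in
  let W1 := diagv (fun i => 1 - beta i) *m W in
  let W2 := diagv beta *m W in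
  let Abar : 'M[R]_(n + n) := block_mx 0 1%:M (Lam *m W2) (Lam *m W1) in
  spectral_radius (Lam *m W) <= spectral_radius Abar.
Proof.
move=> hlam [W_nn Wsum] hbeta /=.
set Lam := diagv lam; set Abar := block_mx _ _ _ _.
have Lam_nn : nonneg_mx Lam by apply: nonneg_diagv => i; case/andP: (hlam i).
have B_nn : nonneg_mx (Lam *m W) by apply: nonneg_mx_mul.
have Bsum i : \sum_j (Lam *m W) i j <= 1.
  under eq_bigr do rewrite diagv_mulmxE.
  by rewrite -mulr_sumr Wsum mulr1; case/andP: (hlam i).
have Abar_nn : nonneg_mx Abar.
  apply/nonneg_block_mxP; split; try by move=> i j; rewrite !mxE ?ler0n.
    apply/nonneg_mx_mul/nonneg_mx_mul => //; apply: nonneg_diagv => i.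
    by case/andP: (hbeta i).
  apply/nonneg_mx_mul/nonneg_mx_mul => //; apply: nonneg_diagv => i.
  by case/andP: (hbeta i) => _; rewrite subr_ge0.
apply: bigmax_norm_le (bigmax_norm_ge0 _) _ => z.
move=> /(nonneg_subeigenvector B_nn) [u [u_nn [i1 ui1] hu]].
have r_le1 := subeigenvalue_le1 B_nn Bsum u_nn ui1 hu.
have x_nn : nonneg_mx (col_mx u (modulus z *: u)).
  by apply/nonneg_col_mxP; split=> // i j; rewrite mxE mulr_ge0 ?modulus_ge0.
have x_neq0 : col_mx u (modulus z *: u) != 0.
  apply: contraTneq ui1 => /matrixP/(_ (lshift n i1) 0).
  by rewrite col_mxEu mxE => ->; rewrite ltxx.
rewrite -modulusE; apply: spectral_radius_ge Abar_nn (modulus_ge0 z) x_nn x_neq0 _.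
by apply: companion_lift_subeigenvector; rewrite ?modulus_ge0.
Qed.
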